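(* For every epistemic transition system, every history $h$ of it, all coalitions $D\subseteq C$ with $C\neq\varnothing$ and every formula $\phi\in\Phi$: if $h\Vdash\mathsf{H}_D\phi$, then $h\Vdash\mathsf{H}_D\mathsf{K}_C\phi$.
   Context: Fix a set of agents $\mathcal{A}$; a coalition is a subset of $\mathcal{A}$. Language $\Phi$: $\phi ::= p \mid \neg\phi \mid \phi\to\phi \mid \mathsf{K}_C\phi \mid \mathsf{H}_C\phi$ ($C\subseteq\mathcal{A}$). An epistemic transition system is a tuple $(W,\{\sim_a\}_{a\in\mathcal{A}},V,M,\pi)$ with $W$ a set of states, each $\sim_a$ an equivalence relation on $W$, $V$ a nonempty set, $M\subseteq W\times V^{\mathcal{A}}\times W$, $\pi$ mapping propositional variables to subsets of $W$. For profiles $\mathbf{s}_1\in V^{C_1},\mathbf{s}_2\in V^{C_2}$ and $C\subseteq C_1\cap C_2$, $\mathbf{s}_1=_C\mathbf{s}_2$ means $(\mathbf{s}_1)_a=(\mathbf{s}_2)_a$ for all $a\in C$. A history is a sequence $(w_0,\mathbf{s}_1,w_1,\dots,\mathbf{s}_n,w_n)$, $n\ge0$, with $w_i\in W$, $\mathbf{s}_i\in V^{\mathcal{A}}$, $(w_i,\mathbf{s}_{i+1},w_{i+1})\in M$; $hd(h)$ is its last element, and $h::\mathbf{s}::w$ denotes extension. $h\approx_a h'$ iff the histories have the same length $n$, their $i$-th states are $\sim_a$-related for all $i$, and their $i$-th profiles agree at $a$ for all $i$; $h\approx_C h'$ iff $h\approx_a h'$ for all $a\in C$. Satisfaction: $h\Vdash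 p$ iff $hd(h)\in\pi(p)$; Boolean clauses standard; $h\Vdash\mathsf{K}_C\phi$ iff $h'\Vdash\phi$ for all histories $h'$ with $h\approx_C h'$; $h\Vdash\mathsf{H}_C\phi$ iff there is $\mathbf{s}\in V^C$ such that for every history $h'::\mathbf{s}'::w'$ with $h\approx_C h'$ and $\mathbf{s}=_C\mathbf{s}'$, $h'::\mathbf{s}'::w'\Vdash\phi$. *)

From Stdlib Require Import List.
Import ListNotations.
Set Implicit Arguments.

Definition coalition (Agent : Type) := Agent -> Prop.

Inductive formula (Agent : Type) : Type :=
| FVar : nat -> formula Agent
| FNot : formula Agent -> formula Agent
| FImp : formula Agent -> formula Agent -> formula Agent
| FK : coalition Agent -> formula Agent -> formula Agent
| FH : coalition Agent -> formula Agent -> formula Agent.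

Arguments FVar {Agent} _.

Record ETS (Agent : Type) := {
  ets_W : Type;
  ets_sim : Agent -> ets_W -> ets_W -> Prop;
  ets_sim_equiv : forall a,
      (forall w, ets_sim a w w) /\
      (forall w u, ets_sim a w u -> ets_sim a u w) /\
      (forall w u v, ets_sim a w u -> ets_sim a u v -> ets_sim a w v);
  ets_V : Type;
  ets_V_nonempty : inhabited ets_V;
  ets_M : ets_W -> (Agent -> ets_V) -> ets_W -> Prop;
  ets_pi : nat -> ets_W -> Prop
}.

Section Semantics.
Variable Agent : Type.
Variable E : ETS Agent.

Notation W := (ets_W E).
Notation V := (ets_V E).
Definition profile := Agent -> V.

(* A (pre)history (w0, [(s1,w1); ...; (sn,wn)]). *)
Definition hist : Type := (W * list (profile * W))%type.

Fixpoint valid_from (w : W) (l : list (profile * W)) : Prop :=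
  match l with
  | [] => True
  | (s, w') :: l' => ets_M E w s w' /\ valid_from w' l'
  end.

Definition is_history (h : hist) : Prop := valid_from (fst h) (snd h).

Definition hd (h : hist) : W := last (map snd (snd h)) (fst h).

Definition ext (h : hist) (s : profile) (w : W) : hist :=
  (fst h, snd h ++ [(s, w)]).

Definition eq_on (C : coalition Agent) (s1 s2 : profile) : Prop :=
  forall a, C a -> s1 a = s2 a.

Definition indist_a (a : Agent) (h h' : hist) : Prop :=
  ets_sim E a (fst h) (fst h') /\
  Forall2 (fun p q => fst p a = fst q a /\ ets_sim E a (snd p) (snd q))
          (snd h) (snd h').

Definition indist (C : coalition Agent) (h h' : hist) : Prop :=
  forall a, C a -> indist_a a h h'.

Fixpoint sat (h : hist) (phi : formula Agent) : Prop :=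
  match phi with
  | FVar p => ets_pi E p (hd h)
  | FNot psi => ~ sat h psi
  | FImp psi chi => sat h psi -> sat h chi
  | FK C psi => forall h', is_history h' -> indist C h h' -> sat h' psi
  | FH C psi =>
      exists s : profile, forall h' s' w',
        is_history h' -> is_history (ext h' s' w') ->
        indist C h h' -> eq_on C s s' -> sat (ext h' s' w') psi
  end.

End Semantics.

(** The strategy [s] witnessing [H_D phi] at [h] also witnesses [H_D (K_C phi)]. Any
    history [C]-indistinguishable from an outcome [h' :: s' :: w'] has the same length
    (here [C] must be nonempty), hence is itself an outcome [h0 :: s0 :: w0] with
    [h0 ~_C h'] and [s0 =_C s']. As [D] is contained in [C], transitivity gives
    [h0 ~_D h] and [s0 =_D s], so [phi] holds at [h0 :: s0 :: w0] by the choice of [s]. *)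
From Stdlib Require Import List.
Import ListNotations.
Set Implicit Arguments.

Lemma Forall2_app_single_inv (A B : Type) (R : A -> B -> Prop) l1 l2 x y :
  Forall2 R (l1 ++ [x]) (l2 ++ [y]) -> Forall2 R l1 l2 /\ R x y.
Proof.
  intros H.
  destruct (Forall2_app_inv_l _ _ H) as (l1' & l2' & H1 & Hx & Hl).
  inversion Hx as [|? ? ? ? Rxy Hnil]; subst.
  inversion Hnil; subst.
  apply app_inj_tail in Hl as [-> ->].
  split; assumption.
Qed.

Lemma Forall2_trans (A B C : Type) (R1 : A -> B -> Prop) (R2 : B -> C -> Prop)
  (R3 : A -> C -> Prop) l1 l2 l3 :
  (forall a b c, R1 a b -> R2 b c -> R3 a c) ->
  Forall2 R1 l1 l2 -> Forall2 R2 l2 l3 -> Forall2 R3 l1 l3.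
Proof.
  intros HR H12; revert l3.
  induction H12; intros l3 H23; inversion H23; subst; constructor; eauto.
Qed.

Section Histories.

Variable Agent : Type.
Variable E : ETS Agent.

Lemma valid_from_app_l w (l1 l2 : list (profile E * ets_W E)) :
  valid_from w (l1 ++ l2) -> valid_from w l1.
Proof.
  revert w; induction l1 as [|[s u] l IH]; simpl; intros w H.
  - exact I.
  - destruct H as [Hstep Hrest]; split; auto.
Qed.

Lemma is_history_ext_inv {h : hist E} {s w} : is_history (ext h s w) -> is_history h.
Proof. apply valid_from_app_l. Qed.

Lemma indist_a_trans a (h1 h2 h3 : hist E) :
  indist_a a h1 h2 -> indist_a a h2 h3 -> indist_a a h1 h3.
Proof.
  destruct (ets_sim_equiv E a) as (_ & _ & sim_trans).
  intros [H12 L12] [H23 L23]; split; [eauto|].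
  eapply Forall2_trans; [|exact L12|exact L23].
  intros p q r [Hpq Spq] [Hqr Sqr]; split; [congruence|eauto].
Qed.

Lemma indist_trans (C : coalition Agent) (h1 h2 h3 : hist E) :
  indist C h1 h2 -> indist C h2 h3 -> indist C h1 h3.
Proof. intros H12 H23 a Ca; eapply indist_a_trans; eauto. Qed.

Lemma indist_sub {C D : coalition Agent} {h h' : hist E} :
  (forall a, D a -> C a) -> indist C h h' -> indist D h h'.
Proof. intros HDC HC a Da; exact (HC a (HDC a Da)). Qed.

Lemma eq_on_trans (C : coalition Agent) (s1 s2 s3 : profile E) :
  eq_on C s1 s2 -> eq_on C s2 s3 -> eq_on C s1 s3.
Proof. intros H12 H23 a Ca; rewrite H12, H23; auto. Qed.

Lemma eq_on_sub {C D : coalition Agent} {s s' : profile E} :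
  (forall a, D a -> C a) -> eq_on C s s' -> eq_on D s s'.
Proof. intros HDC HC a Da; exact (HC a (HDC a Da)). Qed.

Lemma indist_a_ext_shape a (h : hist E) s w (h'' : hist E) :
  indist_a a (ext h s w) h'' -> exists h0 s0 w0, h'' = ext h0 s0 w0.
Proof.
  destruct h'' as [u l'']; intros [_ L]; simpl in L.
  destruct (Forall2_app_inv_l _ _ L) as (l1 & l2 & _ & Hx & ->).
  inversion Hx as [|? [s0 w0] ? ? _ Hnil]; subst.
  inversion Hnil; subst.
  exists (u, l1), s0, w0; reflexivity.
Qed.

Lemma indist_a_ext_inv a (h h' : hist E) s s' w w' :
  indist_a a (ext h s w) (ext h' s' w') -> indist_a a h h' /\ s a = s' a.
Proof.
  intros [Hw L].
  apply Forall2_app_single_inv in L as [L [Hs _]].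
  split; [split|]; assumption.
Qed.

Lemma indist_ext_inv (C : coalition Agent) (h : hist E) s w (h'' : hist E) :
  (exists a, C a) -> indist C (ext h s w) h'' ->
  exists h0 s0 w0, h'' = ext h0 s0 w0 /\ indist C h h0 /\ eq_on C s s0.
Proof.
  intros [a Ca] HC.
  destruct (indist_a_ext_shape (HC a Ca)) as (h0 & s0 & w0 & ->).
  exists h0, s0, w0; split; [reflexivity|split].
  - intros b Cb; exact (proj1 (indist_a_ext_inv (HC b Cb))).
  - intros b Cb; exact (proj2 (indist_a_ext_inv (HC b Cb))).
Qed.

End Histories.

Theorem lemma13 (Agent : Type) (E : ETS Agent) (h : hist E)
  (C D : coalition Agent) (phi : formula Agent) :
  is_history h ->
  (forall a, D a -> C a) ->
  (exists a, C a) ->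
  sat h (FH D phi) ->
  sat h (FH D (FK C phi)).
Proof.
  intros _ HDC HC_ne [s Hs]; exists s.
  intros h' s' w' _ _ HD Hs' h'' Hh'' HC.
  destruct (indist_ext_inv HC_ne HC) as (h0 & s0 & w0 & -> & Hh0 & Hs0).
  apply Hs.
  - exact (is_history_ext_inv Hh'').
  - exact Hh''.
  - exact (indist_trans HD (indist_sub HDC Hh0)).
  - exact (eq_on_trans Hs' (eq_on_sub HDC Hs0)).
Qed.
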